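(* Let $h:Q\to P$ be an $\iota$-map of positive opetopes, $k\ge0$, $q\in Q_{k+2}$ and $q'\in\delta(q)$ such that $h(q),h(q')\in P_k$. Then $h(q')=h(\gamma(q))$.
   Context: A positive hypergraph $S$ consists of finite sets $S_k$ ($k\in\mathbb{N}$), only finitely many nonempty, functions $\gamma:S_{k+1}\to S_k$, and for each $k$ an assignment $\delta$ sending each $a\in S_{k+1}$ to a nonempty subset $\delta(a)\subseteq S_k$, with $\delta(a)$ a singleton for $a\in S_1$. A face is identified with its singleton; $\gamma(X)=\{\gamma(a):a\in X\}$, $\delta(X)=\bigcup_{a\in X}\delta(a)$. For $k>0$ the lower order $<^-$ on $S_k$ is the transitive closure of: $a\lhd b$ iff $\gamma(a)\in\delta(b)$. The upper order $<^+$ on $S_k$ is the transitive closure of: $a\lhd b$ iff there is $\alpha\in S_{k+1}$ with $a\in\delta(\alpha)$, $\gamma(\alpha)=b$; $a\perp^{\pm}b$ iff $a<^{\pm}b$ or $b<^{\pm}a$. A positive opetopic cardinal: $S_0\ne\emptyset$; globularity ($\gamma\gamma(a)=\gamma\delta(a)-\delta\delta(a)$, $\delta\gamma(a)=\delta\delta(a)-\gamma\delta(a)$ for $\dim a\ge2$); each $<^+$ a strict order, linear on $S_0$; for $k>0$, $\perp^-\cap\perp^+=\emptyset$ on $S_k$; for $x\in S_{k-1}$, $\{a:\gamma(a)=x\}$ and $\{a:x\in\delta(a)\}$ linearly ordered by $<^+$. A positive opetope: additionally $|P_m-\delta(P_{m+1})|\le1$ for all $m$. $\gamma^{(k)}(p)=p$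 if $\dim p\le k$, else $\gamma^{(k)}(p)=\gamma(\gamma^{(k+1)}(p))$. An $\iota$-map $h:Q\to P$ of positive opetopes is a function on faces with: $\dim h(q)\le\dim q$; $h(\gamma^{(k)}(q))=\gamma^{(k)}(h(q))$ for $k\ge0$, $q\in Q_{k+1}$; and, with $\ker(h)=\{q:\dim q>\dim h(q)\}$, for $q\in Q_{k+1}$: if $\dim h(q)=k+1$, $h$ restricts to a bijection $\delta(q)-\ker(h)\to\delta(h(q))$; if $\dim h(q)=k$, to a bijection $\delta(q)-\ker(h)\to\{h(q)\}$; if $\dim h(q)<k$, $\delta(q)\subseteq\ker(h)$. *)

From mathcomp Require Import all_boot.
#[local] Set Warnings "-notation-overridden".
Set Implicit Arguments. Unset Strict Implicit. Unset Printing Implicit Defensive.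

(* A (candidate) positive hypergraph: all faces of all dimensions are collected
   in one finite type [face]; [dim a = k] means a ∈ S_k.  [gam] and [del] are
   only meaningful on faces of positive dimension (their values on 0-faces are
   irrelevant junk and are never used). *)
Record hgraph := HGraph {
  face : finType;
  dim : face -> nat;
  gam : face -> face;
  del : face -> {set face}
}.

Section Defs.
Variable S : hgraph.
Local Notation F := (face S).
Local Notation dim := (@dim S).
Local Notation gam := (@gam S).
Local Notation del := (@del S).

Definition is_pos_hypergraph : Prop :=
  forall a : F, 0 < dim a ->
    [/\ dim (gam a) = (dim a).-1,
        del a != set0,
        (forall b, b \in del a -> dim b = (dim a).-1) &
        (dim a = 1 -> #|del a| = 1)].

Definition gamS (X : {set F}) : {set F} := gam @: X.
Definition delS (X : {set F}) : {set F} := \bigcup_(a in X) del a.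

Definition tclos (r : rel F) : rel F :=
  fun a b => [exists c, r a c && connect r c b].

Definition lower_step (a b : F) : bool :=
  [&& 0 < dim a, dim a == dim b & gam a \in del b].
Definition lt_minus : rel F := tclos lower_step.

Definition upper_step (a b : F) : bool :=
  (dim a == dim b) &&
  [exists al : F, [&& dim al == (dim b).+1, a \in del al & gam al == b]].
Definition lt_plus : rel F := tclos upper_step.

Definition perp_minus (a b : F) : bool := lt_minus a b || lt_minus b a.
Definition perp_plus (a b : F) : bool := lt_plus a b || lt_plus b a.

(* A set is linearly ordered by <+ (which is already a strict order) *)
Definition plus_linear (X : {set F}) : Prop :=
  forall a b, a \in X -> b \in X -> a != b -> perp_plus a b.

Definition is_pos_opetopic_cardinal : Prop :=
  is_pos_hypergraph /\
  (exists a : F, dim a = 0) /\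
      (forall a : F, 2 <= dim a ->
         [set gam (gam a)] = gamS (del a) :\: delS (del a) /\
         del (gam a) = delS (del a) :\: gamS (del a)) /\
      (* each <+ is a strict order (transitive by construction) *)
      (forall a : F, ~~ lt_plus a a) /\
      plus_linear [set a | dim a == 0] /\
      (forall a b : F, 0 < dim a -> dim a = dim b ->
         ~~ (perp_minus a b && perp_plus a b)) /\
      (forall x : F,
         plus_linear [set a | (dim a == (dim x).+1) && (gam a == x)] /\
         plus_linear [set a | (dim a == (dim x).+1) && (x \in del a)]).

Definition is_pos_opetope : Prop :=
  is_pos_opetopic_cardinal /\
  forall m : nat,
    #|[set a : F | dim a == m] :\: delS [set a : F | dim a == m.+1]| <= 1.

(* γ^(k)(p): p if dim p <= k, else γ(γ^(k+1)(p)); i.e. γ iterated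
   (dim p - k) times. *)
Definition gamk (k : nat) (p : F) : F := iter (dim p - k) gam p.

End Defs.

Section IotaMap.
Variables Q P : hgraph.

Definition ker (h : face Q -> face P) : {set face Q} :=
  [set q | dim (h q) < dim q].

Definition is_iota_map (h : face Q -> face P) : Prop :=
  [/\ (forall q, dim (h q) <= dim q),
      (forall k q, dim q = k.+1 -> h (gamk k q) = gamk k (h q)) &
      (forall k q, dim q = k.+1 ->
         let A := del q :\: ker h in
         [/\ dim (h q) = k.+1 -> {in A &, injective h} /\ h @: A = del (h q),
             dim (h q) = k -> {in A &, injective h} /\ h @: A = [set h q] &
             dim (h q) < k -> del q \subset ker h])].
End IotaMap.

From mathcomp Require Import all_boot.

Set Implicit Arguments.
Unset Strict Implicit.
Unset Printing Implicit Defensive.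

(* Let b ∈ δ(q) with h(b) ∈ P_k.  Then h(γ b) = h(b).  If γ b lies in δ(b') for
   some b' ∈ δ(q), then γ b is not collapsed by h, which forces h(b') ∈ P_k and
   h(b') = h(γ b) = h(b); moreover γ b <+ γ b'.  Since <+ is a strict order on a
   finite set, this can only happen finitely often, and we end at some b with
   γ b ∈ γδ(q) − δδ(q) = {γγ q}, where h(b) = h(γγ q) = h(γ q). *)

Section UpwardInduction.
Variables (T : finType) (r : rel T).
Hypotheses (r_trans : transitive r) (r_irr : irreflexive r).

Lemma transitive_irreflexive_ind (Pr : T -> Prop) :
  (forall a, (forall b, r a b -> Pr b) -> Pr a) -> forall a, Pr a.
Proof.
move=> IH a; have [n] := ubnP #|[set c | r a c]|.
elim: n a => // n IHn a; rewrite ltnS => le_a_n; apply: IH => b rab.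
apply: IHn; apply: leq_trans le_a_n; apply/proper_card/properP; split.
  by apply/subsetP => c; rewrite !inE; apply: r_trans.
by exists b; rewrite inE ?r_irr.
Qed.

End UpwardInduction.

Lemma tclos_step (S : hgraph) (r : rel (face S)) a b : r a b -> tclos r a b.
Proof. by move=> rab; apply/existsP; exists b; rewrite rab connect0. Qed.

Lemma tclos_trans (S : hgraph) (r : rel (face S)) : transitive (tclos r).
Proof.
move=> b a c /existsP[a' /andP[raa' a'b]] /existsP[b' /andP[rbb' b'c]].
apply/existsP; exists a'; rewrite raa'.
by apply: connect_trans a'b (connect_trans (connect1 rbb') b'c).
Qed.

Section IotaMapFaces.
Variables (Q P : hgraph) (h : face Q -> face P).
Hypothesis h_iota : is_iota_map h.

Lemma iota_gam_collapse k q :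
  dim q = k.+1 -> dim (h q) <= k -> h (gam q) = h q.
Proof.
case: h_iota => _ h_gamk _ dq dhq; have := h_gamk k q dq.
by rewrite /gamk dq subSnn (eqP (_ : dim (h q) - k == 0)) ?subn_eq0.
Qed.

Lemma iota_del_collapse k q b :
  dim q = k.+1 -> dim (h q) = k -> b \in del q -> b \notin ker h -> h b = h q.
Proof.
case: h_iota => _ _ h_del dq dhq bq bNker.
have [_ /(_ dhq)[_ img_del] _] := h_del k q dq.
by apply/set1P; rewrite -img_del imset_f // inE bNker.
Qed.

Lemma iota_del_sub_ker k q :
  dim q = k.+1 -> dim (h q) < k -> del q \subset ker h.
Proof. by case: h_iota => _ _ h_del dq; have [_ _] := h_del k q dq. Qed.

End IotaMapFaces.

Section CollapsedFace.
Variables (Q P : hgraph) (h : face Q -> face P) (k : nat) (q : face Q).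
Hypotheses (Q_hgraph : is_pos_hypergraph Q) (h_iota : is_iota_map h).
Hypotheses (lt_plus_irr : irreflexive (@lt_plus Q))
  (glob_q : [set gam (gam q)] = gamS (del q) :\: delS (del q)).
Hypotheses (dq : dim q = k.+2) (dhq : dim (h q) = k).

Lemma dim_del_q b : b \in del q -> dim b = k.+1.
Proof.
by have [|_ _ dim_del _] := @Q_hgraph q; rewrite ?dq // => /dim_del; rewrite dq.
Qed.

Lemma dim_gam_del_q b : b \in del q -> dim (gam b) = k.
Proof.
move=> bq; have db := dim_del_q bq.
by have [|-> _ _ _] := @Q_hgraph b; rewrite db.
Qed.

Lemma dim_h_del_q b : b \in del q -> dim (h b) <= k.
Proof.
move=> bq; have := iota_del_sub_ker h_iota dq; rewrite dhq => /(_ (ltnSn k)).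
by move/subsetP/(_ b bq); rewrite inE dim_del_q.
Qed.

Lemma h_gam_del_q b : b \in del q -> h (gam b) = h b.
Proof.
move=> bq; apply: (iota_gam_collapse h_iota (k := k));
by rewrite ?dim_del_q ?dim_h_del_q.
Qed.

Lemma h_gam_q : h (gam q) = h q.
Proof. by apply: (iota_gam_collapse h_iota dq); rewrite dhq. Qed.

Lemma h_gam_gam_q : h (gam (gam q)) = h q.
Proof.
have [|dgq _ _ _] := @Q_hgraph q; first by rewrite dq.
rewrite dq /= in dgq.
by rewrite (iota_gam_collapse h_iota dgq) h_gam_q ?dhq.
Qed.

Lemma upper_step_gam_del_q b b' : b \in del q -> b' \in del q ->
  gam b \in del b' -> upper_step (gam b) (gam b').
Proof.
move=> bq b'q gbb'; rewrite /upper_step !dim_gam_del_q // eqxx /=.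
by apply/existsP; exists b'; rewrite dim_del_q // gbb' !eqxx.
Qed.

Lemma h_del_q_step b b' : b \in del q -> dim (h b) = k ->
  b' \in del q -> gam b \in del b' -> dim (h b') = k /\ h b' = h b.
Proof.
move=> bq dhb b'q gbb'; have db' := dim_del_q b'q.
have gbNker : gam b \notin ker h.
  by rewrite inE h_gam_del_q // dhb dim_gam_del_q // ltnn.
have dhb' : dim (h b') = k.
  apply/eqP; rewrite eqn_leq dim_h_del_q // leqNgt; apply/negP => lt_hb'.
  have /subsetP/(_ _ gbb') := iota_del_sub_ker h_iota db' lt_hb'.
  exact/negP.
split=> //; rewrite -(h_gam_del_q bq).
by symmetry; apply: (iota_del_collapse h_iota db' dhb' gbb' gbNker).
Qed.

Lemma h_del_q_source b :
  b \in del q -> gam b \notin delS (del q) -> h b = h (gam q).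
Proof.
move=> bq gbN; have /set1P ggb : gam b \in [set gam (gam q)].
  by rewrite glob_q inE gbN imset_f.
by rewrite -h_gam_del_q // ggb h_gam_gam_q h_gam_q.
Qed.

Lemma h_del_q_eq b : b \in del q -> dim (h b) = k -> h b = h (gam q).
Proof.
move: {2}(gam b) (erefl (gam b)) => x.
elim/(transitive_irreflexive_ind (@tclos_trans Q _) lt_plus_irr): x b.
move=> x IH b gbx bq dhb; subst x.
have [/bigcupP[b' b'q gbb'] | ] := boolP (gam b \in delS (del q)); last first.
  exact: h_del_q_source.
have [dhb' <-] := h_del_q_step bq dhb b'q gbb'.
apply: (IH (gam b') _ b') => //.
exact: tclos_step (upper_step_gam_del_q bq b'q gbb').
Qed.

End CollapsedFace.

Theorem mainTheorem8 (Q P : hgraph) (h : face Q -> face P) (k : nat)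
    (q q' : face Q) :
  is_pos_opetope Q -> is_pos_opetope P -> is_iota_map h ->
  dim q = k.+2 -> q' \in del q ->
  dim (h q) = k -> dim (h q') = k ->
  h q' = h (gam q).
Proof.
move=> [[Q_hgraph [_ [Q_glob [lt_plus_irr _]]]] _] _ h_iota dq q'q dhq dhq'.
have [|glob_q _] := Q_glob q; first by rewrite dq.
have lt_plus_irr' : irreflexive (@lt_plus Q) by move=> a; apply/negbTE.
exact: h_del_q_eq Q_hgraph h_iota lt_plus_irr' glob_q dq dhq _ q'q dhq'.
Qed.
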